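(* Let $\varphi:U\times U\to V$ be a fully-regular alternating bilinear map and $\mathcal{S}_\varphi:=\{\varphi(x,-)\mid x\in U\}\subseteq\mathcal{L}(U,V)$. If $\#\mathbb{K}>\mathrm{urk}(\mathcal{S}_\varphi)$, then $\mathcal{S}_\varphi$ is semi-primitive.
   Context: $U,V$ finite-dimensional over a field $\mathbb{K}$. $\varphi$ is fully-regular if $V$ is spanned by its values and $\varphi(x,-)\ne0$ for all nonzero $x$. $\mathrm{urk}$ is the maximal rank of an operator in the space. For an operator space $\mathcal{T}\subseteq\mathcal{L}(U,V)$: reduced means $\bigcap_f\ker f=\{0\}$ and $\sum_f\mathrm{im} f=V$; $c$-defective means $\dim\ker f\geq c$ for all $f\in\mathcal{T}$; the defectiveness index is the greatest such $c$; $\mathcal{T}$ is semi-primitive if it is reduced and there is no linear hyperplane $U'$ of $U$ such that $\{f_{|U'}\mid f\in\mathcal{T}\}$ is $c$-defective, $c$ being the defectiveness index of $\mathcal{T}$. *)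

From HB Require Import structures.
From mathcomp Require Import all_boot all_order all_algebra.
Set Implicit Arguments. Unset Strict Implicit. Unset Printing Implicit Defensive.
Import Order.TTheory GRing.Theory.
Local Open Scope ring_scope.

Section OperatorSpaces.
Variables (K : fieldType) (U V : vectType K).

Definition op_space := 'Hom(U, V) -> Prop.

Definition reduced (T : op_space) : Prop :=
  (forall u : U, (forall f, T f -> f u = 0) -> u = 0) /\
  (forall W : {vspace V}, (forall f, T f -> (limg f <= W)%VS) -> W = fullv).

Definition c_defective (T : op_space) (c : nat) : Prop :=
  forall f, T f -> (c <= \dim (lker f))%N.

Definition is_defect_index (T : op_space) (c : nat) : Prop :=
  c_defective T c /\ forall d, c_defective T d -> (d <= c)%N.

(* the restrictions {f|U' | f in T} are c-defective; ker (f|U') = ker f :&: U' *)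
Definition restr_c_defective (T : op_space) (U' : {vspace U}) (c : nat) : Prop :=
  forall f, T f -> (c <= \dim (lker f :&: U')%VS)%N.

Definition hyperplane (U' : {vspace U}) : Prop :=
  (\dim U').+1 = \dim (fullv : {vspace U}).

Definition semi_primitive (T : op_space) : Prop :=
  reduced T /\
  forall c, is_defect_index T c ->
    ~ (exists U' : {vspace U}, hyperplane U' /\ restr_c_defective T U' c).

Definition is_urk (T : op_space) (r : nat) : Prop :=
  (exists f, T f /\ \dim (limg f) = r) /\
  (forall f, T f -> (\dim (limg f) <= r)%N).

Definition bilinear_map (phi : U -> U -> V) : Prop :=
  (forall x, linear (phi x)) /\ (forall y, linear (fun x => phi x y)).

Definition alternating (phi : U -> U -> V) : Prop := forall x, phi x x = 0.

Definition fully_regular (phi : U -> U -> V) : Prop :=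
  (forall W : {vspace V}, (forall x y, phi x y \in W) -> W = fullv) /\
  (forall x, x != 0 -> exists y, phi x y != 0).

Definition S_of (phi : U -> U -> V) : op_space :=
  fun f => exists x : U, forall y, f y = phi x y.

End OperatorSpaces.

(* #K > n : K has more than n elements (K may be infinite) *)
Definition card_gt (K : eqType) (n : nat) : Prop :=
  exists s : seq K, uniq s && (n < size s)%N.

From HB Require Import structures.
From mathcomp Require Import all_boot all_order all_algebra.
From mathcomp Require Import zify.
From Stdlib Require Import Classical.
Set Implicit Arguments. Unset Strict Implicit. Unset Printing Implicit Defensive.
Import Order.TTheory GRing.Theory.
Local Open Scope ring_scope.

(* Reducedness of S_phi is a direct rephrasing of full regularity, using
   skew-symmetry phi(x,y) = -phi(y,x).  For the second half, let c be the
   defectiveness index, so that r = dim U - c is the upper rank, and suppose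
   the restrictions to a hyperplane U' are still c-defective.  Then each x
   with rank phi(x,-) = r has its (c-dimensional) kernel inside U', hence
   x \in U' since phi(x,x) = 0.  Fix such an x0 and some y outside U'.  The
   pencil k phi(x0,-) + phi(y,-) = phi(k x0 + y, -) consists of operators of
   rank < r, as k x0 + y never lies in U'; but a pencil whose leading term has
   rank r contains an operator of rank >= r as soon as k ranges over more than
   r scalars (a characteristic polynomial of degree r has at most r roots). *)

Section ShiftedRank.
Variable K : fieldType.

(* A square matrix D of size r has at most r eigenvalues, so among more than
   r distinct scalars k some shift D + k is invertible. *)
Lemma few_singular_shifts r (D : 'M[K]_r) (s : seq K) :
  uniq s -> (r < size s)%N -> exists2 k, k \in s & D + k%:M \in unitmx.
Proof.
move=> s_uniq s_large.
have [/hasP[k ks Dk_unit]|/hasPn Dk_sing] :=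
  boolP (has (fun k => D + k%:M \in unitmx) s); first by exists k.
have roots_char : all (root (char_poly D)) (map -%R s).
  apply/allP => _ /mapP[k ks ->].
  rewrite -eigenvalue_root_char /eigenvalue /eigenspace kermx_eq0.
  by rewrite raddfN opprK row_free_unit Dk_sing.
have := max_poly_roots (monic_neq0 (char_poly_monic D)) roots_char.
rewrite size_char_poly size_map map_inj_uniq ?s_uniq; last exact: oppr_inj.
by rewrite ltnS leqNgt s_large => /(_ isT).
Qed.

(* After Gaussian elimination A = L (pid r) R, and the r x r
   upper-left block of L^-1 (k A + B) R^-1 is a shift D + k of a fixed D. *)
Lemma pencil_rank_ge m n (A B : 'M[K]_(m, n)) (s : seq K) :
  uniq s -> (\rank A < size s)%N ->
  exists2 k, k \in s & (\rank A <= \rank (k *: A + B)%R)%N.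
Proof.
move=> s_uniq s_large; set r := \rank A.
set L := col_ebase A; set R := row_ebase A.
have L_unit : L \in unitmx := col_ebase_unit A.
have R_unit : R \in unitmx := row_ebase_unit A.
set B' := invmx L *m B *m invmx R.
have pencilE k : k *: A + B = L *m (k *: pid_mx r + B') *m R.
  rewrite mulmxDr mulmxDl -scalemxAr -scalemxAl mulmx_ebase.
  by rewrite /B' !mulmxA mulmxV // mul1mx -mulmxA mulVmx // mulmx1.
pose P : 'M[K]_(r, m) := pid_mx r.
pose Q : 'M[K]_(n, r) := pid_mx r.
set D := P *m B' *m Q.
have blockE k : D + k%:M = P *m (k *: pid_mx r + B') *m Q.
  rewrite mulmxDr mulmxDl addrC -scalemxAr -scalemxAl /P /Q.
  by rewrite pid_mx_id ?rank_leq_row // pid_mx_id ?rank_leq_col // pid_mx_1 scalemx1.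
have [k ks Dk_unit] := few_singular_shifts D s_uniq s_large.
exists k => //.
apply: (@leq_trans (\rank (D + k%:M)%R)); first by rewrite (mxrank_unit Dk_unit).
rewrite blockE pencilE (mxrankMfree _ (etrans (row_free_unit R) R_unit)).
rewrite (eqmxMfull _ (etrans (row_full_unit L) L_unit)).
exact: leq_trans (mxrankM_maxl _ _) (mxrankM_maxr _ _).
Qed.

End ShiftedRank.

Section PencilOfOperators.
Variables (K : fieldType) (U V : vectType K).
Import VectorInternalTheory.

Lemma dim_limg_rank (f : 'Hom(U, V)) : \dim (limg f) = \rank (f2mx f).
Proof.
rewrite /dimv (_ : limg f = mx2vs (vs2mx fullv *m f2mx f)); last by rewrite unlock.
by rewrite mx2vsK /fullv /= genmx1 mul1mx.
Qed.

Lemma f2mx_pencil (A B : 'Hom(U, V)) k :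
  f2mx (k *: A + B) = k *: f2mx A + f2mx B.
Proof.
have f2mxE (f : 'Hom(U, V)) u : u *m f2mx f = v2r (f (r2v u)).
  rewrite (_ : fun_of_lfun f = r2v \o mulmxr (f2mx f) \o v2r) ?unlock //=.
  by rewrite !r2vK.
apply/row_matrixP => i; rewrite !rowE mulmxDr -scalemxAr !f2mxE.
by rewrite add_lfunE scale_lfunE linearD linearZ.
Qed.

Lemma pencil_dim_limg_ge (A B : 'Hom(U, V)) (s : seq K) :
  uniq s -> (\dim (limg A) < size s)%N ->
  exists2 k, k \in s & (\dim (limg A) <= \dim (limg (k *: A + B)%R))%N.
Proof.
rewrite !dim_limg_rank => s_uniq s_large.
have [k ks rk_k] := pencil_rank_ge (f2mx B) s_uniq s_large.
by exists k; rewrite // dim_limg_rank f2mx_pencil.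
Qed.

End PencilOfOperators.

Section OperatorSpaces.
Variables (K : fieldType) (U V : vectType K) (T : op_space U V).
Local Notation n := (\dim (fullv : {vspace U})).

Lemma dim_lker (f : 'Hom(U, V)) : \dim (lker f) = (n - \dim (limg f))%N.
Proof. by rewrite -(limg_ker_dim f fullv) capfv addnK. Qed.

(* If c is the defectiveness index of T, then dim U - c is its upper rank:
   by maximality of c, T is not (c+1)-defective, which provides an operator
   with kernel of dimension exactly c. *)
Lemma defect_index_urk c : is_defect_index T c -> is_urk T (n - c).
Proof.
move=> [T_cdef c_max].
have rank_le_dim (f : 'Hom(U, V)) : (\dim (limg f) <= n)%N.
  by rewrite -(limg_ker_dim f fullv) leq_addl.
have [f f_not_def] : exists f, ~ (T f -> (c.+1 <= \dim (lker f))%N).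
  apply: not_all_ex_not => T_c1def.
  by have := c_max _ T_c1def; rewrite ltnn.
have [Tf /negP] := imply_to_and _ _ f_not_def.
rewrite -ltnNge ltnS dim_lker => small_ker.
split.
  exists f; split=> //; have := T_cdef f Tf; rewrite dim_lker.
  have := rank_le_dim f; lia.
move=> g Tg; have := T_cdef g Tg; rewrite dim_lker.
have := rank_le_dim g; lia.
Qed.

Lemma small_lker_sub (U' : {vspace U}) c f :
  restr_c_defective T U' c -> T f -> (\dim (lker f) <= c)%N ->
  (lker f <= U')%VS.
Proof.
move=> U'_restr Tf small_ker; apply/capv_idPl/eqP.
rewrite -(dimv_leqif_eq (capvSl (lker f) U')) eqn_leq dimvS ?capvSl //=.
exact: leq_trans small_ker (U'_restr f Tf).
Qed.

Lemma hyperplane_proper (U' : {vspace U}) :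
  hyperplane U' -> exists y : U, y \notin U'.
Proof.
move=> U'_hyp; have /subvPn[y _ y_notin] : ~~ (fullv <= U')%VS.
  by apply/negP => /dimvS; rewrite -U'_hyp ltnn.
by exists y.
Qed.

End OperatorSpaces.

Section AlternatingMaps.
Variables (K : fieldType) (U V : vectType K) (phi : U -> U -> V).
Hypotheses (phi_bilinear : bilinear_map phi) (phi_alt : alternating phi).

Let phi_r (x : U) : {linear U -> V} :=
  HB.pack (phi x) (GRing.isLinear.Build K U V _ (phi x) (phi_bilinear.1 x)).
Let phi_l (y : U) : {linear U -> V} :=
  HB.pack (phi^~ y) (GRing.isLinear.Build K U V _ (phi^~ y) (phi_bilinear.2 y)).

Definition phi_op (x : U) : 'Hom(U, V) := linfun (phi x).

Lemma phi_opE x y : phi_op x y = phi x y.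
Proof. exact: (lfunE (phi_r x)). Qed.

Lemma S_ofP f : S_of phi f <-> exists x, f = phi_op x.
Proof.
split=> [[x fE]|[x ->]]; exists x; last exact: phi_opE.
by apply/lfunP => y; rewrite fE phi_opE.
Qed.

Lemma S_of_phi_op x : S_of phi (phi_op x).
Proof. by apply/S_ofP; exists x. Qed.

Lemma phi_op_pencil k x y : k *: phi_op x + phi_op y = phi_op (k *: x + y).
Proof.
apply/lfunP => z; rewrite add_lfunE scale_lfunE !phi_opE.
by rewrite -[RHS]/(phi_l z (k *: x + y)) linearP.
Qed.

Lemma phi_skew x y : phi x y = - phi y x.
Proof.
have phiDl u v w : phi (u + v) w = phi u w + phi v w := linearD (phi_l w) u v.
have phiDr u v w : phi u (v + w) = phi u v + phi u w := linearD (phi_r u) v w.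
have := phi_alt (x + y); rewrite phiDl !phiDr !phi_alt.
by rewrite add0r addr0 => /eqP; rewrite addr_eq0 => /eqP.
Qed.

Lemma mem_lker_phi_op x : x \in lker (phi_op x).
Proof. by rewrite memv_ker phi_opE phi_alt. Qed.

(* A fully-regular alternating map yields a reduced operator space: the common
   kernel of S_phi is the left radical of phi by skew-symmetry, and the images
   of S_phi span the space spanned by the values of phi. *)
Lemma fully_regular_reduced : fully_regular phi -> reduced (S_of phi).
Proof.
move=> [phi_span phi_nondeg]; split.
  move=> u u_ker; apply/eqP; apply: contraT => /phi_nondeg[y].
  by rewrite phi_skew -phi_opE (u_ker _ (S_of_phi_op y)) oppr0 eqxx.
move=> W W_img; apply: phi_span => x y; rewrite -phi_opE.
exact: subvP (W_img _ (S_of_phi_op x)) _ (memv_img _ (memvf y)).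
Qed.

(* If the restrictions of S_phi to U' are c-defective, then every x for which
   phi(x, -) has rank at least dim U - c lies in U': the kernel of phi(x, -)
   is contained in U' and contains x. *)
Lemma large_rank_mem (U' : {vspace U}) c x :
  restr_c_defective (S_of phi) U' c ->
  (\dim (fullv : {vspace U}) - c <= \dim (limg (phi_op x)))%N -> x \in U'.
Proof.
move=> U'_restr large_rank; apply: subvP (mem_lker_phi_op x).
apply: small_lker_sub U'_restr (S_of_phi_op x) _.
by rewrite dim_lker leq_subCl.
Qed.

End AlternatingMaps.

Theorem mainTheorem17 (K : fieldType) (U V : vectType K) (phi : U -> U -> V) :
  bilinear_map phi -> alternating phi -> fully_regular phi ->
  (forall r, is_urk (S_of phi) r -> card_gt K r) ->
  semi_primitive (S_of phi).
Proof.
move=> phi_bil phi_alt phi_reg card_K.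
split; first exact: fully_regular_reduced.
move=> c c_index [U' [U'_hyp U'_restr]].
have urk := defect_index_urk c_index.
have [s /andP[s_uniq s_large]] := card_K _ urk.
have [[_ [/(S_ofP phi_bil) [x0 ->] rk_x0]] _] := urk.
have x0_in : x0 \in U'.
  by apply: (large_rank_mem phi_bil phi_alt U'_restr); rewrite rk_x0.
have [y y_notin] := hyperplane_proper U'_hyp.
rewrite -rk_x0 in s_large.
have [k _] := pencil_dim_limg_ge (phi_op phi y) s_uniq s_large.
rewrite (phi_op_pencil phi_bil) rk_x0.
move=> /(large_rank_mem phi_bil phi_alt U'_restr) pencil_in; move: y_notin.
by rewrite -(addKr (k *: x0) y) rpredD ?rpredN ?rpredZ.
Qed.
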